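(* There exist a family $\mathcal F_0$ of $3$ axis-parallel rectangles and a constant $\varepsilon>0$ such that $\pi_L(\mathcal F_0)\ge \pi(\mathcal F_0)+\varepsilon$.
   Context: For a finite family $\mathcal F$ of closed axis-parallel rectangles in the plane, a point set $P\subset\mathbb R^2$ is $\mathcal F$-piercing if every translate of every rectangle in $\mathcal F$ contains a point of $P$. The density of a point set $P$ is $\limsup_{r\to\infty} |P\cap[-r,r]^2|/(2r)^2$. $\pi(\mathcal F)$ is the infimum of the densities of $\mathcal F$-piercing point sets, and $\pi_L(\mathcal F)$ is the infimum of the densities of $\mathcal F$-piercing lattices, where a lattice $\{iu+jv:i,j\in\mathbb Z\}$ ($u,v$ linearly independent) has density $1/|\det[u,v]|$. *)

From HB Require Import structures.
From mathcomp Require Import all_boot all_order all_algebra.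
From mathcomp Require Import all_classical all_reals all_analysis.
From mathcomp Require Import Rstruct Rstruct_topology finmap.
Set Implicit Arguments. Unset Strict Implicit. Unset Printing Implicit Defensive.
Import Order.TTheory GRing.Theory Num.Theory.
Local Open Scope classical_set_scope.
Local Open Scope ring_scope.

Notation R := Rdefinitions.R.

Definition point := (R * R)%type.

(* A closed axis-parallel rectangle up to translation is given by its
   side lengths (w, h); its translate by (x, y) is [x, x+w] x [y, y+h]. *)
Definition translate (rect : R * R) (x y : R) : set point :=
  [set p | x <= p.1 <= x + rect.1 /\ y <= p.2 <= y + rect.2].

Definition piercing (F : seq (R * R)) (P : set point) : Prop :=
  forall rect, rect \in F -> forall x y : R,
    exists p, P p /\ translate rect x y p.

Definition ecard (A : set point) : \bar R :=
  if pselect (finite_set A) then ((#|` fset_set A|%fset)%:R)%:E else +oo%E.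

Definition square (r : R) : set point :=
  [set p | -r <= p.1 <= r /\ -r <= p.2 <= r].

Definition density (P : set point) : \bar R :=
  ereal_inf [set ereal_sup
     [set (ecard (P `&` square r) * ((2 * r) ^+ 2)^-1%:E)%E | r in [set r | R0 < r]]
   | R0 in [set: R]].

Definition det2 (u v : point) : R := u.1 * v.2 - u.2 * v.1.

Definition lattice (u v : point) : set point :=
  [set p | exists i j : int, p = (i%:~R * u.1 + j%:~R * v.1, i%:~R * u.2 + j%:~R * v.2)].

Definition pi_dens (F : seq (R * R)) : \bar R :=
  ereal_inf [set density P | P in [set P | piercing F P]].

Definition piL_dens (F : seq (R * R)) : \bar R :=
  ereal_inf [set (`|det2 uv.1 uv.2|^-1)%:E |
     uv in [set uv : point * point | det2 uv.1 uv.2 != 0 /\ piercing F (lattice uv.1 uv.2)]].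

From HB Require Import structures.
From mathcomp Require Import all_boot all_order all_algebra.
From mathcomp Require Import all_classical all_reals all_analysis.
From mathcomp Require Import Rstruct Rstruct_topology finmap.
From mathcomp Require Import ring lra zify.
Import Order.TTheory GRing.Theory Num.Theory.
Set Implicit Arguments. Unset Strict Implicit. Unset Printing Implicit Defensive.
Local Open Scope classical_set_scope.
Local Open Scope ring_scope.

(* Take F0 = {1 x 1, 1/3 x 4, 1/6 x 6}.

   A non-lattice set of density 1 pierces F0: on each horizontal line y = k
   put the points of Z + s(k)/6, where s runs periodically through
   0, 2, 4, 1, 5, 3. Any 6 consecutive rows use all six shifts, any 4
   consecutive rows contain two shifts at distance 1/6 (mod 1), and each row
   alone meets every unit interval.

   A piercing lattice of determinant D > 99/100 does not exist. A tall
   1/6 x 6 box yields a lattice vector v with |v.1| <= 1/12 and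
   0 < v.2 <= 6.01, and a second one yields w with det(w, v) = D, so that
   (w, v) is a basis. The lattice points then lie on the lines
   det(p, v) = i D, and on line i they form the progression i w + Z v.
   Placing boxes of F0 at suitable positions between these lines forces
   first v.2 > 5.8, then pins the vertical offset t of line 1 to
   [v.2 - 4.01, 4.01], and finally the six residues i t mod v.2
   (0 <= i <= 5) leave a vertical gap of length > 1: a unit square centred
   on line 5/2 and placed in that gap contains no lattice point. Hence
   pi_L(F0) >= 100/99 > 1.01 >= pi(F0). *)

Definition lcomb (i j : int) (u v : R * R) : R * R :=
  (i%:~R * u.1 + j%:~R * v.1, i%:~R * u.2 + j%:~R * v.2).

Lemma det2_lcomb i1 j1 i2 j2 u v :
  det2 (lcomb i1 j1 u v) (lcomb i2 j2 u v) = (i1 * j2 - j1 * i2)%:~R * det2 u v.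
Proof. by rewrite /det2 /= rmorphB /= !rmorphM /=; ring. Qed.

Lemma det2_lcombl i j w v : det2 (lcomb i j w v) v = i%:~R * det2 w v.
Proof. by rewrite /det2 /=; ring. Qed.

Lemma det2_lattice u v p q : lattice u v p -> lattice u v q ->
  exists k : int, det2 p q = k%:~R * `|det2 u v|.
Proof.
move=> [i1 [j1 ->]] [i2 [j2 ->]]; rewrite det2_lcomb.
have [d_ge0 | d_lt0] := leP 0 (det2 u v).
  by exists (i1 * j2 - j1 * i2); rewrite ger0_norm.
by exists (- (i1 * j2 - j1 * i2)); rewrite ltr0_norm // rmorphN mulrNN.
Qed.

(* Cramer's rule: det2 w v * p = det2 p v * w + det2 w p * v. *)
Lemma sub_lattice_basis u v0 w v : det2 w v = `|det2 u v0| -> det2 u v0 != 0 ->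
  lattice u v0 w -> lattice u v0 v -> lattice u v0 `<=` lattice w v.
Proof.
move=> wvE d_neq0 Lw Lv p Lp.
have [i ipE] := det2_lattice Lp Lv; have [j wpE] := det2_lattice Lw Lp.
have D_neq0 : det2 w v != 0 by rewrite wvE normr_eq0.
exists i, j; rewrite -wvE in ipE wpE; move: ipE wpE D_neq0.
case: p {Lp} => p1 p2; rewrite /det2 /= => ipE wpE D_neq0.
congr (_, _); apply: (mulfI D_neq0).
- transitivity ((p1 * v.2 - p2 * v.1) * w.1 + (w.1 * p2 - w.2 * p1) * v.1); first by ring.
  by rewrite ipE wpE; ring.
- transitivity ((p1 * v.2 - p2 * v.1) * w.2 + (w.1 * p2 - w.2 * p1) * v.2); first by ring.
  by rewrite ipE wpE; ring.
Qed.

Lemma det2_translate_center a b c v p (s : R) : 0 <= v.2 -> `|v.1| <= s ->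
  translate (a, b) (c.1 - a / 2) (c.2 - b / 2) p ->
  `|det2 p v - det2 c v| <= a / 2 * v.2 + b / 2 * s.
Proof.
move=> v2_ge0 v1_le [/= /andP[px1 px2] /andP[py1 py2]].
have -> : det2 p v - det2 c v = (p.1 - c.1) * v.2 - (p.2 - c.2) * v.1.
  by rewrite /det2; ring.
apply: (le_trans (ler_normB _ _)); rewrite !normrM (ger0_norm v2_ge0).
apply: lerD; first by apply: ler_wpM2r => //; rewrite ler_norml; apply/andP; split; lra.
by apply: ler_pM => //; rewrite ler_norml; apply/andP; split; lra.
Qed.

Lemma det2_center_on_level C y v : v.2 != 0 -> det2 ((C + y * v.1) / v.2, y) v = C.
Proof. by move=> v2_neq0; rewrite /det2 /=; field. Qed.

Lemma ltr_int_pM2r (D : R) (m n : int) : 0 < D ->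
  (m%:~R * D < n%:~R * D) = (m < n)%R.
Proof. by move=> D_gt0; rewrite ltr_pM2r // ltr_int. Qed.

Lemma int_between_of_approx (D C d : R) (i lo hi : int) : 0 < D ->
  `|i%:~R * D - C| <= d -> lo%:~R * D < C - d -> C + d < hi%:~R * D ->
  (lo < i < hi)%R.
Proof.
move=> D_gt0 /[!ler_norml] /andP[iD_ge iD_le] lo_lt hi_gt.
by rewrite -!(ltr_int_pM2r _ _ D_gt0); apply/andP; split; lra.
Qed.

Lemma sub_piercing F P Q : P `<=` Q -> piercing F P -> piercing F Q.
Proof.
move=> PQ pierceP rect Frect x y.
by have [p [Pp rp]] := pierceP rect Frect x y; exists p; split=> //; apply: PQ.
Qed.

Definition mirror (P : set (R * R)) : set (R * R) := [set p | P (p.1, - p.2)].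

Lemma piercing_mirror F P : piercing F P -> piercing F (mirror P).
Proof.
move=> pierceP [a b] Frect x y.
have [[p1 p2] [Pp [/= px py]]] := pierceP _ Frect x (- y - b).
exists (p1, - p2); rewrite /mirror /= opprK; split=> //; split=> //=; lra.
Qed.

Lemma mirror_lattice w v :
  mirror (lattice w v) `<=` lattice (w.1, - w.2) (- v.1, v.2).
Proof.
move=> [p1 p2] [i [j /= [-> /eqP]]]; rewrite eqr_oppLR => /eqP ->.
by exists i, (- j); rewrite /= rmorphN; congr (_, _); ring.
Qed.

Definition F0 : seq (R * R) := [:: (1, 1); (1/3, 4); (1/6, 6)].

Fact F0_square : (1, 1) \in F0. Proof. by rewrite !inE eqxx. Qed.
Fact F0_medium : (1/3, 4) \in F0. Proof. by rewrite !inE eqxx orbT. Qed.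
Fact F0_tall : (1/6, 6) \in F0. Proof. by rewrite !inE eqxx !orbT. Qed.

(** * Piercing lattices of F0 have determinant at most 99/100 *)

Definition thin_basis (w v : R * R) : Prop :=
  [/\ piercing F0 (lattice w v), 99/100 < det2 w v,
      -(1/12) <= v.1 <= 1/12 & 0 < v.2 <= 6 + 1/100].

Lemma lattice_point_in_box w v a b c (lo hi : int) : thin_basis w v -> (a, b) \in F0 ->
  lo%:~R * det2 w v < det2 c v - (a / 2 * v.2 + b / 24) ->
  det2 c v + (a / 2 * v.2 + b / 24) < hi%:~R * det2 w v ->
  exists i j : int, (lo < i < hi)%R /\
    translate (a, b) (c.1 - a / 2) (c.2 - b / 2) (lcomb i j w v).
Proof.
case=> pierce D_gt v1_range /andP[v2_gt0 _] Fab lo_lt hi_gt.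
have [_ [[i [j ->]] box]] := pierce _ Fab (c.1 - a / 2) (c.2 - b / 2).
exists i, j; split; last exact: box.
apply: (int_between_of_approx _ _ lo_lt hi_gt); first exact: lt_trans D_gt.
have v1_small : `|v.1| <= 1/12 by rewrite ler_norml.
rewrite -(det2_lcombl i j).
by apply: (le_trans (det2_translate_center (ltW v2_gt0) v1_small box)); lra.
Qed.

Lemma lattice_point_on_level w v a b C y (lo hi : int) : thin_basis w v -> (a, b) \in F0 ->
  lo%:~R * det2 w v < C - (a / 2 * v.2 + b / 24) ->
  C + (a / 2 * v.2 + b / 24) < hi%:~R * det2 w v ->
  exists i j : int, (lo < i < hi)%R /\ y <= i%:~R * w.2 + j%:~R * v.2 <= y + b.
Proof.
move=> wv Fab; have v2_neq0 : v.2 != 0 by case: wv => _ _ _ /andP[v2_gt0 _]; rewrite gt_eqF.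
rewrite -(det2_center_on_level C (y + b / 2) v2_neq0) => lo_lt hi_gt.
have [i [j [i_range [_ /= yb]]]] := lattice_point_in_box wv Fab lo_lt hi_gt.
by exists i, j; split=> //; move: yb; lra.
Qed.

(* The tall box just left of w + v and above w meets line 0 or line 1.
   On line 1 its point would be w + j v with j >= 1, to the right of the box;
   on line 0 it is j v, and fitting j v into the box needs v.2 > 29/5. *)
Lemma large_v2_of_nonneg w v : thin_basis w v -> 0 <= v.1 -> 29/5 < v.2.
Proof.
move=> wv v1_ge0; have [_ D_gt /andP[_ v1_le] /andP[v2_gt0 v2_le]] := wv.
pose c := (w.1 + v.1 - 1/12 - 1/1000, w.2 + 3 + 1/100).
have cE : det2 c v = det2 w v + v.1 * v.2 - v.2 / 12 - v.2 / 1000 - (3 + 1/100) * v.1.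
  by rewrite /det2 /=; ring.
have sV_ge0 : 0 <= v.1 * v.2 by rewrite mulr_ge0 // ltW.
have sV_le : v.1 * v.2 <= 1/12 * v.2 by rewrite ler_pM2r.
have lo_lt : (-1)%:~R * det2 w v < det2 c v - (1/6 / 2 * v.2 + 6 / 24) by rewrite cE; lra.
have hi_gt : det2 c v + (1/6 / 2 * v.2 + 6 / 24) < 2%:~R * det2 w v by rewrite cE; lra.
have [i [j [/andP[i_gt i_lt] box]]] := lattice_point_in_box wv F0_tall lo_lt hi_gt.
move: box; have [-> | ->] : i = 0 \/ i = 1 by clear -i_gt i_lt; lia.
- rewrite /lcomb mulr0z !mul0r !add0r => -[/= /andP[px1 _] /andP[_ py2]].
  have px1V := ler_wpM2r (ltW v2_gt0) px1.
  have py2v1 := ler_wpM2r v1_ge0 py2.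
  have v1_slack : (6 + 1/100 - v.2) * v.1 <= (6 + 1/100 - v.2) * (1/12).
    by rewrite ler_wpM2l //; lra.
  by move: D_gt; rewrite /det2 => D_gt; lra.
- rewrite /lcomb mulr1z !mul1r => -[/= /andP[_ px2] /andP[py1 _]].
  have j_gt0 : (0 < j)%R by rewrite -(ltr_int_pM2r _ _ v2_gt0); lra.
  have : 1%:~R * v.1 <= j%:~R * v.1 by rewrite ler_wpM2r // ler_int.
  lra.
Qed.

Lemma thin_basis_mirror w v :
  thin_basis w v -> thin_basis (w.1, - w.2) (- v.1, v.2).
Proof.
case=> pierce D_gt /andP[v1_ge v1_le] v2_range; split.
- exact: sub_piercing (@mirror_lattice w v) (piercing_mirror pierce).
- by rewrite /det2 /= mulrNN.
- by apply/andP; split=> /=; lra.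
- by [].
Qed.

Lemma large_v2 w v : thin_basis w v -> 29/5 < v.2.
Proof.
move=> wv; have [v1_ge0 | v1_lt0] := leP 0 v.1; first exact: large_v2_of_nonneg wv v1_ge0.
by apply: (large_v2_of_nonneg (thin_basis_mirror wv)) => /=; lra.
Qed.

(* A box of height 4 centred on line 1/2 meets line 0 or line 1, and line 0
   is excluded when the box misses the lattice points 0 and +-v. *)
Lemma level_one_row w v y : thin_basis w v -> 29/5 < v.2 ->
  - v.2 < y -> y + 4 < v.2 -> (0 < y \/ y + 4 < 0) ->
  exists j : int, y <= w.2 + j%:~R * v.2 <= y + 4.
Proof.
move=> wv V_large y_gt y_lt y_off0; have [_ D_gt _ /andP[v2_gt0 v2_le]] := wv.
have lo_lt : (-1)%:~R * det2 w v < det2 w v / 2 - (1/3 / 2 * v.2 + 4 / 24) by lra.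
have hi_gt : det2 w v / 2 + (1/3 / 2 * v.2 + 4 / 24) < 2%:~R * det2 w v by lra.
have [i [j [/andP[i_gt i_lt]]]] := lattice_point_on_level y wv F0_medium lo_lt hi_gt.
have [-> | ->] : i = 0 \/ i = 1 by clear -i_gt i_lt; lia.
- rewrite mulr0z mul0r add0r => /andP[jV_ge jV_le].
  have /andP[j_gt j_lt] : (-1 < j < 1)%R.
    by rewrite -!(ltr_int_pM2r _ _ v2_gt0); apply/andP; split; lra.
  have j0 : j = 0 by lia.
  by move: jV_ge jV_le; rewrite j0 mulr0z mul0r; lra.
- by rewrite mulr1z mul1r; exists j.
Qed.

Lemma row_offset w v : thin_basis w v -> 29/5 < v.2 ->
  exists j : int, v.2 - (4 + 1/100) <= w.2 + j%:~R * v.2 <= 4 + 1/100.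
Proof.
move=> wv V_large; have [_ _ _ /andP[v2_gt0 v2_le]] := wv.
have [ja /andP[ja_ge ja_le]] : exists j : int, 1/100 <= w.2 + j%:~R * v.2 <= 1/100 + 4.
  by apply: level_one_row => //; [lra | lra | left; lra].
have [jb /andP[jb_ge jb_le]] :
    exists j : int, - (4 + 1/100) <= w.2 + j%:~R * v.2 <= - (4 + 1/100) + 4.
  by apply: level_one_row => //; [lra | lra | right; lra].
have /andP[d_gt d_lt] : (0 < ja - jb < 2)%R.
  by rewrite -!(ltr_int_pM2r _ _ v2_gt0) rmorphB /=; apply/andP; split; lra.
have ja_jb : ja = jb + 1 by lia.
by exists ja; move: ja_le; rewrite ja_jb rmorphD /=; lra.
Qed.

Lemma progression_gap (a V y : R) (m : int) : 0 < V ->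
  a + m%:~R * V < y -> y + 1 < a + (m + 1)%:~R * V ->
  forall k : int, ~ (y <= a + k%:~R * V <= y + 1).
Proof.
move=> V_gt0 below above k /andP[k_ge k_le].
have [k_le_m | m_lt_k] := lerP k m.
- have : k%:~R * V <= m%:~R * V by rewrite ler_pM2r // ler_int.
  lra.
- have : (m + 1)%:~R * V <= k%:~R * V by rewrite ler_pM2r // ler_int; lia.
  lra.
Qed.

Lemma int_cases_0_5 (P : int -> Prop) : P 0 -> P 1 -> P 2 -> P 3 -> P 4 -> P 5 ->
  forall i : int, (0 <= i <= 5)%R -> P i.
Proof.
move=> P0 P1 P2 P3 P4 P5 i /andP[i_ge0 i_le5].
by have [->|[->|[->|[->|[->|->]]]]] : i = 0 \/ i = 1 \/ i = 2 \/ i = 3 \/ i = 4 \/ i = 5 by lia.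
Qed.

(* Explicit gaps, found separately for four ranges of t / V. *)
Lemma exists_gap (t V : R) : 29/5 < V -> V <= 6 + 1/100 ->
  V - (4 + 1/100) <= t <= 4 + 1/100 ->
  exists y, forall i : int, (0 <= i <= 5)%R -> exists m : int,
    i%:~R * t + m%:~R * V < y /\ y + 1 < i%:~R * t + (m + 1)%:~R * V.
Proof.
move=> V_gt V_le /andP[t_ge t_le].
have [t1 | t1] := lerP t (13/32 * V).
  exists (2 * t - 9/2 * V - 1/2); apply: int_cases_0_5;
  [exists (-4) | exists (-5) | exists (-5) | exists (-5) | exists (-6) | exists (-6)];
  split; lra.
have [t2 | t2] := lerP t (17/32 * V).
  exists (5/2 * t - 9/2 * V - 1/2); apply: int_cases_0_5;
  [exists (-4) | exists (-4) | exists (-5) | exists (-5) | exists (-6) | exists (-6)];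
  split; lra.
have [t3 | t3] := lerP t (19/32 * V).
  exists (5/2 * t - 5 * V - 1/2); apply: int_cases_0_5;
  [exists (-4) | exists (-5) | exists (-5) | exists (-6) | exists (-6) | exists (-7)];
  split; lra.
exists (2 * t - 9/2 * V - 1/2); apply: int_cases_0_5;
[exists (-4) | exists (-4) | exists (-5) | exists (-6) | exists (-6) | exists (-7)];
split; lra.
Qed.

(* The unit square centred on line 5/2 and placed in the gap meets a line
   0 <= i <= 5, whose points have heights i t + Z v.2, t the offset of line 1. *)
Lemma thin_basis_false w v : ~ thin_basis w v.
Proof.
move=> wv; have [_ D_gt _ /andP[v2_gt0 v2_le]] := wv.
have V_large := large_v2 wv.
have [ja t_range] := row_offset wv V_large.
have [y gap] := exists_gap V_large v2_le t_range.
have lo_lt : (-1)%:~R * det2 w v < 5/2 * det2 w v - (1 / 2 * v.2 + 1 / 24) by lra.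
have hi_gt : 5/2 * det2 w v + (1 / 2 * v.2 + 1 / 24) < 6%:~R * det2 w v by lra.
have [i [j [/andP[i_gt i_lt] yb]]] := lattice_point_on_level y wv F0_square lo_lt hi_gt.
have [|m [below above]] := gap i; first by clear -i_gt i_lt; apply/andP; split; lia.
apply: (progression_gap (k := j - i * ja) v2_gt0 below above).
suff -> : i%:~R * (w.2 + ja%:~R * v.2) + (j - i * ja)%:~R * v.2 =
  i%:~R * w.2 + j%:~R * v.2 :> R by [].
by rewrite rmorphB rmorphM /=; ring.
Qed.

Lemma exists_thin_basis u v0 : det2 u v0 != 0 -> piercing F0 (lattice u v0) ->
  99/100 < `|det2 u v0| -> exists w v, thin_basis w v.
Proof.
move=> d_neq0 pierce D_gt; set D := `|det2 u v0| in D_gt *.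
have [v [Lv [/= /andP[v1_ge v1_le] /andP[v2_ge v2_le]]]] :=
  pierce _ F0_tall (- (1/12)) (1/100).
have v2_gt0 : 0 < v.2 by lra.
have v1_small : `|v.1| <= 1/12 by rewrite ler_norml; apply/andP; split; lra.
pose c : R * R := ((D + 3 * v.1) / v.2, 3).
have [w [Lw box]] := pierce _ F0_tall (c.1 - 1/6 / 2) (c.2 - 6 / 2).
have w_near := det2_translate_center (ltW v2_gt0) v1_small box.
have [k wvE] := det2_lattice Lw Lv; rewrite -/D in wvE.
rewrite wvE det2_center_on_level ?gt_eqF // in w_near.
have /andP[k_gt k_lt] : (0 < k < 2)%R by apply: (int_between_of_approx _ w_near); lra.
have k1 : k = 1 by clear -k_gt k_lt; lia.
have wv_D : det2 w v = D by rewrite wvE k1 mulr1z mul1r.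
exists w, v; split=> //.
- exact: sub_piercing (sub_lattice_basis wv_D d_neq0 Lw Lv) pierce.
- by rewrite wv_D.
- by apply/andP; split; lra.
- by apply/andP; split; lra.
Qed.

Lemma piercing_lattice_det_le u v0 : det2 u v0 != 0 -> piercing F0 (lattice u v0) ->
  `|det2 u v0| <= 99/100.
Proof.
move=> d_neq0 pierce; rewrite leNgt; apply/negP => D_gt.
by have [w [v /thin_basis_false]] := exists_thin_basis d_neq0 pierce D_gt.
Qed.

(** * A piercing set of density 1 *)

Definition row_shift (k : int) : nat := (nth 0 [:: 0; 2; 4; 1; 5; 3] (absz (k %% 6)%Z))%N.

Definition P0 : set (R * R) :=
  [set p | exists a k : int, p = (a%:~R / 6, k%:~R) /\ (a %% 6)%Z = row_shift k].

(* [covers rmax dmax]: for all residues q, K mod 6, some row K + r (r <= rmax)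
   has its shift among the columns q + d (d <= dmax), counted in sixths.
   It is phrased with [all]/[has] over [iota] because [forall]/[exists] over
   ordinals do not reduce, and the instances below are checked by evaluation. *)
Definition covers (rmax dmax : nat) : bool :=
  all (fun q => all (fun K => has (fun r => has (fun d =>
      ((q + d) %% 6 == row_shift (K + r)%N)%N) (iota 0 dmax.+1)) (iota 0 rmax.+1))
    (iota 0 6)) (iota 0 6).

Fact covers_square : covers 0 5. Proof. by []. Qed.
Fact covers_medium : covers 3 1. Proof. by []. Qed.
Fact covers_tall : covers 5 0. Proof. by []. Qed.

Lemma modz6_absz (c : int) : (c %% 6)%Z = (absz (c %% 6)%Z)%:Z.
Proof. by rewrite gez0_abs // modz_ge0. Qed.

Lemma covers_int rmax dmax : covers rmax dmax -> forall c K : int,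
  exists r d : nat, [/\ r <= rmax, d <= dmax & ((c + d%:Z) %% 6)%Z = row_shift (K + r%:Z)]%N.
Proof.
move=> cov c K; set q := absz (c %% 6)%Z; set K' := absz (K %% 6)%Z.
have q_in : q \in iota 0 6 by rewrite mem_iota -ltz_nat -modz6_absz ltz_pmod.
have K_in : K' \in iota 0 6 by rewrite mem_iota -ltz_nat -modz6_absz ltz_pmod.
have /hasP[r r_in /hasP[d d_in /eqP cdE]] := allP (allP cov q q_in) K' K_in.
exists r, d; rewrite !mem_iota /= in r_in d_in; split=> //.
rewrite -modzDml [(c %% 6)%Z]modz6_absz -PoszD modz_nat cdE /row_shift.
by rewrite -[in RHS]modzDml [(K %% 6)%Z]modz6_absz -PoszD.
Qed.

Lemma exists_int_in_unit (z : R) : exists n : int, z < n%:~R <= z + 1.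
Proof.
exists (Num.floor z + 1); have /andP[fl_le lt_fl1] := floor_itv z.
by rewrite lt_fl1 rmorphD /= lerD2r.
Qed.

Lemma P0_pierces (w h : R) (rmax dmax : nat) : covers rmax dmax ->
  dmax%:R + 1 <= 6 * w -> rmax%:R + 1 <= h ->
  forall x y, exists p, P0 p /\ translate (w, h) x y p.
Proof.
move=> cov w_ge h_ge x y.
have [c /andP[c_gt c_le]] := exists_int_in_unit (6 * x).
have [K /andP[K_gt K_le]] := exists_int_in_unit y.
have [r [d [r_le d_le cdE]]] := covers_int cov c K.
exists ((c + d%:Z)%:~R / 6, (K + r%:Z)%:~R).
split; first by exists (c + d%:Z), (K + r%:Z).
have r_le' : r%:R <= rmax%:R :> R by rewrite ler_nat.
have d_le' : d%:R <= dmax%:R :> R by rewrite ler_nat.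
have r_ge0 := ler0n R r; have d_ge0 := ler0n R d.
by rewrite /translate /= !rmorphD /= -!pmulrn; split; apply/andP; split; lra.
Qed.

Lemma P0_piercing : piercing F0 P0.
Proof.
move=> [a b]; rewrite !inE => /or3P[] /eqP[-> ->].
- by apply: (P0_pierces covers_square); lra.
- by apply: (P0_pierces covers_medium); lra.
- by apply: (P0_pierces covers_tall); lra.
Qed.

Lemma ecard_le_grid (A : set (R * R)) (g : nat -> nat -> R * R) (M : nat) :
  (forall p, A p -> exists i j, [/\ i < M, j < M & p = g i j]%N) ->
  (ecard A <= (M * M)%:R%:E)%E.
Proof.
move=> Ag; pose f idx := g (idx %/ M)%N (idx %% M)%N.
have AM : (A #<= `I_(M * M))%card.
  apply: card_le_trans (card_image_le f _); apply: subset_card_le => p /Ag[i [j [iM jM ->]]].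
  exists (i * M + j); first by rewrite /=; nia.
  have M_gt0 : (0 < M)%N by apply: leq_ltn_trans jM.
  by rewrite /f divnMDl // modnMDl divn_small // modn_small // addn0.
rewrite /ecard; case: pselect => [? | infA]; first by rewrite lee_fin ler_nat geq_card_fset_set.
by exfalso; apply/infA/finite_set_leP; exists (M * M)%N.
Qed.

Lemma row_shift_lt (k : int) : (row_shift k < 6)%N.
Proof.
by rewrite /row_shift; case: (absz (k %% 6)%Z) => [|[|[|[|[|[|n]]]]]] //=; rewrite nth_nil.
Qed.

Definition P0_point (m k : int) : R * R := ((m * 6 + (row_shift k)%:Z)%:~R / 6, k%:~R).

Lemma P0E p : P0 p <-> exists m k : int, p = P0_point m k.
Proof.
split=> [[a [k [-> a_mod]]] | [m [k ->]]].
  by exists (a %/ 6)%Z, k; rewrite /P0_point -a_mod -divz_eq.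
exists (m * 6 + (row_shift k)%:Z), k; split=> //.
by rewrite modzMDl modz_small //; apply/andP; split=> //; rewrite ltz_nat row_shift_lt.
Qed.

Lemma P0_square_grid (n : nat) (r : R) : r < n%:R -> forall p, (P0 `&` square r) p ->
  exists i j, [/\ i < 2 * n, j < 2 * n & p = P0_point (i%:Z - n%:Z) (j%:Z - n%:Z)]%N.
Proof.
move=> r_lt _ [/P0E[m [k ->]] [/= /andP[x_ge x_le] /andP[y_ge y_le]]].
have xE : (m * 6 + (row_shift k)%:Z)%:~R / 6 = m%:~R + (row_shift k)%:R / 6 :> R.
  by rewrite rmorphD rmorphM /= -pmulrn; field.
rewrite xE in x_ge x_le.
have s_ge0 := ler0n R (row_shift k).
have s_lt6 : (row_shift k)%:R < 6 :> R by rewrite ltr_nat row_shift_lt.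
have /andP[k_gt k_lt] : (- n%:Z < k < n%:Z)%R.
  by rewrite -!(ltr_int R) rmorphN /= -pmulrn; apply/andP; split; lra.
have /andP[m_gt m_lt] : (- n%:Z - 1 < m < n%:Z)%R.
  by rewrite -!(ltr_int R) rmorphB rmorphN /= -pmulrn; apply/andP; split; lra.
exists (absz (m + n%:Z)), (absz (k + n%:Z)).
clear -k_gt k_lt m_gt m_lt; split; [lia | lia |].
by rewrite !gez0_abs ?addrK //; lia.
Qed.

Lemma density_P0 : (density P0 <= (1 + 1/100)%:E)%E.
Proof.
rewrite /density; apply: (@le_trans _ _ (ereal_sup [set (ecard (P0 `&` square r) *
    ((2 * r) ^+ 2)^-1%:E)%E | r in [set r | 400 < r]])).
  by apply: ereal_inf_lbound; exists 400.
apply/ereal_supP => _ [r /= r_gt <-].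
have r_gt0 : 0 < r by lra.
have /andP[tr_le r_lt] := truncn_itv (ltW r_gt0).
set n := (Num.truncn r).+1 in r_lt.
have n_le : n%:R <= r + 1 by rewrite /n -addn1 natrD lerD2r.
have sq_gt0 : 0 < (2 * r) ^+ 2 by rewrite exprn_gt0 // mulr_gt0.
apply: (le_trans (lee_wpmul2r _ (ecard_le_grid (P0_square_grid r_lt)))).
  by rewrite lee_fin invr_ge0 ltW.
rewrite -EFinM lee_fin ler_pdivrMr // natrM natrM.
have n_ge0 := ler0n R n.
have : n%:R * n%:R <= (r + 1) * (r + 1) by apply: ler_pM.
have : 400 * r <= r * r by rewrite ler_pM2r // ltW.
rewrite expr2; lra.
Qed.

Lemma pi_dens_F0_le : (pi_dens F0 <= (1 + 1/100)%:E)%E.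
Proof.
apply: le_trans density_P0; apply: ereal_inf_lbound.
by exists P0 => //; exact: P0_piercing.
Qed.

Lemma piL_dens_F0_ge : ((100/99)%:E <= piL_dens F0)%E.
Proof.
apply/ereal_infP => _ [[u v] /= [d_neq0 pierce] <-].
have D_le := piercing_lattice_det_le d_neq0 pierce.
have D_gt0 : 0 < `|det2 u v| by rewrite normr_gt0.
by rewrite lee_fin -(mul1r (`|det2 u v|^-1)) ler_pdivlMr //; lra.
Qed.

Fact F0_uniq : uniq F0.
Proof.
have ne12 : (1, 1) != (1/3, 4) :> R * R by apply/eqP => -[]; lra.
have ne13 : (1, 1) != (1/6, 6) :> R * R by apply/eqP => -[]; lra.
have ne23 : (1/3, 4) != (1/6, 6) :> R * R by apply/eqP => -[]; lra.
by rewrite /= !inE !negb_or ne12 ne13 ne23.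
Qed.

Fact F0_gt0 rect : rect \in F0 -> 0 < rect.1 /\ 0 < rect.2.
Proof. by rewrite !inE => /or3P[] /eqP-> /=; split; lra. Qed.

Theorem theorem4 :
  exists (F0 : seq (R * R)) (eps : R),
    [/\ size F0 = 3%N, uniq F0, (forall rect, rect \in F0 -> 0 < rect.1 /\ 0 < rect.2),
        0 < eps & (piL_dens F0 >= pi_dens F0 + eps%:E)%E].
Proof.
exists F0, (1/10000); split; [by [] | exact: F0_uniq | exact: F0_gt0 | lra |].
apply: le_trans piL_dens_F0_ge; apply: le_trans (leeD2r _ pi_dens_F0_le) _.
by rewrite -EFinD lee_fin; lra.
Qed.
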